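(* Let $\mathcal P$ be a finite set with $|\mathcal P|=n$, $\kappa\in(0,1)$, $\lambda>0$, $\ell_1,\dots,\ell_T:\mathcal P\to[0,1]$, $\mu_1(i)=\kappa$ for all $i$, $\Gamma$ the set of $\kappa$-dense measures on $\mathcal P$, and $\mu_{T+1}=\Pi_\Gamma\tilde\mu_{T+1}$ with $\tilde\mu_{T+1}(i)=e^{-\lambda\sum_{t=1}^T\ell_t(i)}\mu_1(i)$. Writing $M(\hat\mu,Q_t)=\mathbb{E}_{i\sim\hat\mu}[\ell_t(i)]$, for all $T\ge1$, \[ \mu_{T+1}=\arg\min_{\mu\in\Gamma}\Big[\lambda|\mu|\sum_{t=1}^TM(\hat\mu,Q_t)+\mathrm{KL}(\mu\|\mu_1)\Big]. \]
   Context: A measure on $\mathcal P$ is $\mu:\mathcal P\to[0,1]$; $|\mu|=\sum_i\mu(i)$; $\kappa$-dense means $|\mu|/n\ge\kappa$; $\hat\mu=\mu/|\mu|$. $\mathrm{KL}(\mu_1\|\mu_2)=\sum_i\mu_1(i)\log(\mu_1(i)/\mu_2(i))+\mu_2(i)-\mu_1(i)$. $\Pi_\Gamma\tilde\mu=\arg\min_{\mu\in\Gamma}\mathrm{KL}(\mu\|\tilde\mu)$. $Q_t$ is the column strategy of round $t$, inducing loss vector $\ell_t$. *)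

From HB Require Import structures.
From mathcomp Require Import all_boot all_order all_algebra.
From mathcomp Require Import all_classical all_reals all_analysis.
Set Implicit Arguments. Unset Strict Implicit. Unset Printing Implicit Defensive.
Import Order.TTheory GRing.Theory Num.Theory.
Local Open Scope ring_scope.

Section Defs.
Variables (R : realType) (P : finType).

Definition is_measure (mu : P -> R) : Prop := forall i, 0 <= mu i <= 1.

Definition msize (mu : P -> R) : R := \sum_(i : P) mu i.

Definition dense (kappa : R) (mu : P -> R) : Prop :=
  msize mu / (#|P|%:R) >= kappa.

Definition Gamma (kappa : R) (mu : P -> R) : Prop :=
  is_measure mu /\ dense kappa mu.

Definition mhat (mu : P -> R) : P -> R := fun i => mu i / msize mu.

(* generalized KL divergence *)
Definition KL (mu1 mu2 : P -> R) : R :=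
  \sum_(i : P) (mu1 i * ln (mu1 i / mu2 i) + mu2 i - mu1 i).

Definition Mloss (muh : P -> R) (ell : P -> R) : R := \sum_(i : P) muh i * ell i.

Definition is_argmin (S : (P -> R) -> Prop) (F : (P -> R) -> R) (mu : P -> R) : Prop :=
  S mu /\ forall nu, S nu -> F mu <= F nu.

End Defs.

(* On Gamma every measure has positive mass, so |nu| * M(nu-hat, Q_t) is just
   the linear loss sum_i nu(i) ell_t(i).  Expanding the logarithm of the
   exponential tilt shows that KL(nu || mu~) differs from
   lambda |nu| sum_t M(nu-hat, Q_t) + KL(nu || mu_1) by the constant
   |mu~| - |mu_1|, and adding a constant does not change the argmin. *)
From Pilot Require Import Defs.
From HB Require Import structures.
From mathcomp Require Import all_boot all_order all_algebra.
From mathcomp Require Import all_classical all_reals all_analysis.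
From mathcomp Require Import lra.
Import Order.TTheory GRing.Theory Num.Theory.
Local Open Scope ring_scope.

Lemma is_argmin_shift {R : realType} {P : finType} (S : (P -> R) -> Prop)
    (F G : (P -> R) -> R) (c : R) (mu : P -> R) :
  (forall nu, S nu -> F nu = G nu + c) ->
  is_argmin S F mu <-> is_argmin S G mu.
Proof.
move=> FGc; split=> -[Smu mu_min]; split=> // nu Snu.
- by have := mu_min nu Snu; rewrite FGc // FGc // lerD2r.
- by rewrite FGc // FGc // lerD2r mu_min.
Qed.

Lemma msize_dense_neq0 {R : realType} {P : finType} (kappa : R) (mu : P -> R) :
  0 < kappa -> Defs.dense kappa mu -> msize mu != 0.
Proof.
move=> kappa_gt0; rewrite /Defs.dense; apply: contraTneq => ->.
by rewrite mul0r -ltNge.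
Qed.

Lemma msize_Mloss_mhat {R : realType} {P : finType} (nu ell : P -> R) :
  msize nu != 0 -> msize nu * Mloss (mhat nu) ell = \sum_i nu i * ell i.
Proof.
move=> nu_neq0; rewrite /Mloss /mhat mulr_sumr; apply: eq_bigr => i _.
by rewrite mulrA mulrCA divff // mulr1.
Qed.

Lemma KL_expR_tilt {R : realType} {P : finType} (lambda : R) (L nu mu : P -> R) :
  (forall i, 0 < mu i) -> (forall i, 0 <= nu i) ->
  KL nu (fun i => expR (- lambda * L i) * mu i)
  = lambda * \sum_i nu i * L i + KL nu mu
    + \sum_i (expR (- lambda * L i) * mu i - mu i).
Proof.
move=> mu_gt0 nu_ge0; rewrite /KL mulr_sumr -!big_split /=.
apply: eq_bigr => i _; have := mu_gt0 i; have := nu_ge0 i.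
move: (nu i) (mu i) (L i) => x a l x_ge0 a_gt0.
have -> : x / (expR (- lambda * l) * a) = x / a * expR (lambda * l).
  by rewrite mulNr expRN invfM invrK mulrAC mulrA.
have [->|x_gt0] := eqVneq x 0; first by rewrite !(mul0r, mulr0); lra.
have x_pos : 0 < x by rewrite lt_def x_gt0 x_ge0.
by rewrite lnM ?expRK ?posrE ?divr_gt0 ?expR_gt0 // mulrDr; lra.
Qed.

Theorem mainTheorem7 (R : realType) (P : finType) (kappa lambda : R) (T : nat)
  (ell : 'I_T -> P -> R) :
  0 < kappa < 1 -> 0 < lambda -> (0 < T)%N ->
  (forall t i, 0 <= ell t i <= 1) ->
  let mu1 : P -> R := fun _ => kappa in
  let mutilde : P -> R :=
    fun i => expR (- lambda * \sum_(t < T) ell t i) * mu1 i in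
  forall mu : P -> R,
    is_argmin (Gamma kappa) (fun nu => KL nu mutilde) mu <->
    is_argmin (Gamma kappa)
      (fun nu => lambda * msize nu * \sum_(t < T) Mloss (mhat nu) (ell t)
                 + KL nu mu1) mu.
Proof.
move=> /andP[kappa_gt0 _] _ _ _ mu1 mutilde mu.
apply: (is_argmin_shift _ _ _ (\sum_i (mutilde i - mu1 i))).
move=> nu [nu_meas nu_dense].
have nu_neq0 := msize_dense_neq0 _ _ kappa_gt0 nu_dense.
have nu_ge0 i : 0 <= nu i by case/andP: (nu_meas i).
rewrite KL_expR_tilt // -mulrA; congr (_ * _ + _ + _).
rewrite mulr_sumr; under [RHS]eq_bigr do rewrite msize_Mloss_mhat //.
by rewrite exchange_big; apply: eq_bigr => i _; rewrite mulr_sumr.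
Qed.
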